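(* For every integer $k\ge 5$, $m_2^{(k-3)}(k-1,k-2)=k+1$.
   Context: For a prime power $q$ and $N\ge1$, a multiset of points in $\mathrm{PG}(N,q)$ is a map $\mathcal{K}$ from the points to $\mathbb{Z}_{\ge0}$, with $\mathcal{K}(S)=\sum_{P\in S}\mathcal{K}(P)$; its cardinality is $\mathcal{K}(\mathrm{PG}(N,q))$. Dimensions are projective (so $(N-2)$-dimensional subspaces of $\mathrm{PG}(N,q)$ are those of codimension two). For $0\le r\le N-1$ and a positive integer $w$, $m_q^{(r)}(N,w)$ is the maximum cardinality of a multiset of points in $\mathrm{PG}(N,q)$ such that every $r$-dimensional subspace has multiplicity at most $w$. *)

From mathcomp Require Import all_boot all_order all_algebra all_field.
Set Implicit Arguments. Unset Strict Implicit. Unset Printing Implicit Defensive.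
Import GRing.Theory.

(* Subspaces of the vector space F^(N+1) are represented canonically by
   square matrices S with <<S>> = S (MathComp's canonical row-space
   representative).  A projective subspace of projective dimension r is a
   vector subspace of rank r+1; points are the rank-1 subspaces. *)

Definition is_subsp {F : fieldType} {n : nat} (d : nat) (S : 'M[F]_n) : bool :=
  (<<S>>%MS == S) && (\rank S == d).

Definition PGpoint (F : finFieldType) (N : nat) :=
  {S : 'M[F]_(N.+1) | is_subsp 1 S}.

Definition multiset (F : finFieldType) (N : nat) := PGpoint F N -> nat.

Definition mult (F : finFieldType) (N : nat) (K : multiset F N)
    (S : 'M[F]_(N.+1)) : nat :=
  (\sum_(P : PGpoint F N | (val P <= S)%MS) K P)%N.

Definition mcard (F : finFieldType) (N : nat) (K : multiset F N) : nat :=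
  (\sum_(P : PGpoint F N) K P)%N.

Definition admissible (F : finFieldType) (N r w : nat) (K : multiset F N) :=
  forall S : 'M[F]_(N.+1), is_subsp r.+1 S -> mult K S <= w.

Definition is_m_value (F : finFieldType) (N r w m : nat) : Prop :=
  (exists K : multiset F N, admissible r w K /\ mcard K = m) /\
  (forall K : multiset F N, admissible r w K -> mcard K <= m).

(* Read the points of a multiset as the rows of a matrix V.  A subspace of
   vector dimension d then contains at most d of the points iff every nonzero
   relation c *m V = 0 has support of size at least d + 2.  The frame
   e_0, ..., e_N, e_0 + ... + e_N has only relations of full support, so its
   N + 2 points meet every codimension-2 subspace in at most N - 1 points.
   Conversely, N + 3 such points of PG(N, 2) satisfy two independent relations
   a and b; each of a, b, a + b has support of size at least N + 1, while over
   F_2 every coordinate lies in at most two of these supports, whence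
   3 (N + 1) <= 2 (N + 3) and N <= 3. *)

From mathcomp Require Import all_boot all_order all_algebra all_field.
From mathcomp Require Import zify.
Set Implicit Arguments. Unset Strict Implicit. Unset Printing Implicit Defensive.
Import GRing.Theory.

Lemma subset_card_between (T : finType) (A B : {set T}) t :
  A \subset B -> #|A| <= t <= #|B| ->
  exists C : {set T}, [/\ A \subset C, C \subset B & #|C| = t].
Proof.
move=> sAB; elim: t => [|t IHt] /andP[leAt letB].
  by exists A; split=> //; apply/eqP; rewrite -leqn0.
have [eqAt | ltAt] := eqVneq #|A| t.+1; first by exists A.
have [|C [sAC sCB cardC]] := IHt; first by rewrite -ltnS ltn_neqAle ltAt leAt ltnW.
have /subsetPn[x Bx Cx] : ~~ (B \subset C).
  by apply: contraTN letB => /subset_leq_card; rewrite cardC -ltnNge.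
exists (x |: C); split; first exact: subset_trans sAC (subsetUr _ _).
  by rewrite subUset sub1set Bx.
by rewrite cardsU1 Cx cardC.
Qed.

Lemma card_sum_indicator (T : finType) (A : {pred T}) : #|A| = \sum_x (x \in A).
Proof. by rewrite -sum1_card big_mkcond. Qed.

Lemma sum_nth_le_count (T : Type) (x0 : T) (a : pred T) t M :
  M <= size t -> \sum_(i < M) a (nth x0 t i) <= count a t.
Proof.
elim: t M => [|x t IHt] [|M] //= leMt; rewrite ?big_ord0 // big_ord_recl /=.
exact: leq_add (IHt M leMt).
Qed.

Local Open Scope ring_scope.

Lemma mxrank_ext (F : fieldType) m n (A : 'M[F]_(m, n)) d :
  (\rank A <= d <= n)%N -> exists2 S : 'M[F]_n, (A <= S)%MS & \rank S = d.
Proof.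
case/andP=> leAd ledn; set e := (d - \rank A)%N.
have le_e : (e <= \rank A^C%MS)%N by rewrite mxrank_compl leq_sub2r.
pose X : 'M[F]_(e, n) := pid_mx e *m row_base A^C%MS.
have rankX : \rank X = e by rewrite mxrankMfree ?row_base_free ?rank_pid_mx.
have sXAC : (X <= A^C)%MS by rewrite -(eq_row_base A^C%MS) submxMl.
exists (A + X)%MS; first exact: addsmxSl.
rewrite mxrank_disjoint_sum ?rankX ?subnKC //; apply/eqP; rewrite -submx0.
by rewrite -(capmx_compl A) capmxS.
Qed.

Section Relations.
Variables (F : fieldType) (m n : nat).
Implicit Type C : {set 'I_m}.

Definition row_support (c : 'rV[F]_m) : {set 'I_m} := [set i | c 0 i != 0].

Definition selmx (C : {set 'I_m}) : 'M[F]_m := diag_mx (\row_i (i \in C)%:R).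

Lemma rank_selmx_le C : (\rank (selmx C) <= #|C|)%N.
Proof.
have -> : selmx C = \sum_(i in C) delta_mx i i.
  rewrite /selmx diag_mx_sum_delta [RHS]big_mkcond; apply: eq_bigr => i _.
  by rewrite mxE; case: (i \in C); rewrite ?scale1r ?scale0r.
rewrite -sum1_card; elim/big_ind2: _ => [|A a B b leA leB|i _].
- by rewrite mxrank0.
- exact: leq_trans (mxrank_add A B) (leq_add leA leB).
- by rewrite mxrank_delta.
Qed.

Lemma selmx_addC C : selmx C + selmx (~: C) = 1%:M.
Proof.
rewrite /selmx -raddfD -diag_const_mx; congr diag_mx; apply/rowP => i.
by rewrite !mxE in_setC; case: (i \in C); rewrite ?addr0 ?add0r.
Qed.

Lemma rank_selmx C : \rank (selmx C) = #|C|.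
Proof.
apply/eqP; rewrite eqn_leq rank_selmx_le -(leq_add2r #|~: C|) cardsC card_ord.
rewrite -[X in (X <= _)%N](mxrank1 F m) -(selmx_addC C).
exact: leq_trans (mxrank_add _ _) (leq_add (leqnn _) (rank_selmx_le _)).
Qed.

Lemma sub_selmx (c : 'rV[F]_m) C : (c <= selmx C)%MS = (row_support c \subset C).
Proof.
apply/idP/subsetP => [/submxP[x ->] i | suppC].
  by rewrite inE mul_mx_diag !mxE; apply: contraR => /negbTE->; rewrite mulr0 eqxx.
apply/submxP; exists c; apply/rowP => i; rewrite mul_mx_diag !mxE.
case Ci: (i \in C); rewrite ?mulr1 // mulr0; apply/esym/eqP.
by apply: contraFT Ci; rewrite eq_sym => nz; apply: suppC; rewrite inE.
Qed.

Variable V : 'M[F]_(m, n).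

Lemma row_sub_selmx_mul C i : i \in C -> (row i V <= selmx C *m V)%MS.
Proof.
move=> Ci; rewrite rowE submxMr // sub_selmx.
by apply/subsetP => j; rewrite inE mxE eqxx; case: (eqVneq j i) => [-> | _]; rewrite /= ?eqxx.
Qed.

Lemma selmx_mul_sub C (S : 'M[F]_n) :
  (forall i, i \in C -> (row i V <= S)%MS) -> (selmx C *m V <= S)%MS.
Proof.
move=> rowsCS; apply/row_subP => j; rewrite row_mul row_diag_mx mxE -scalemxAl -rowE.
by have [/rowsCS/scalemx_sub-> | _] := boolP (j \in C); rewrite ?scale0r ?sub0mx.
Qed.

Lemma rank_selmx_mul_lt C : (\rank (selmx C *m V) < #|C|)%N <->
  exists c : 'rV_m, [/\ c != 0, c *m V = 0 & row_support c \subset C].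
Proof.
rewrite -(rank_selmx C) -(mxrank_mul_ker (selmx C) V).
rewrite -[X in (X < _)%N]addn0 ltn_add2l lt0n mxrank_eq0.
split=> [nzK | [c [nz_c cV0 suppC]]].
  have := nz_row_sub (selmx C :&: kermx V)%MS.
  rewrite sub_capmx sub_selmx => /andP[suppC /sub_kermxP cV0].
  by exists (nz_row (selmx C :&: kermx V)%MS); rewrite nz_row_eq0.
have : (c <= selmx C :&: kermx V)%MS by rewrite sub_capmx sub_selmx suppC; apply/sub_kermxP.
by apply: contraTneq => ->; rewrite submx0.
Qed.

Definition rows_bounded d := forall S : 'M[F]_n,
  \rank S = d -> (#|[set i | (row i V <= S)%MS]| <= d)%N.

Lemma rows_boundedP d : (d < m)%N -> (d <= n)%N -> rows_bounded d <->
  forall c : 'rV_m, c != 0 -> c *m V = 0 -> (d.+1 < #|row_support c|)%N.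
Proof.
move=> ltdm ledn; split=> [bddV c nz_c cV0 | supp_gt S rankS].
  rewrite ltnNge; apply/negP => small_c.
  have [|C [suppC _ cardC]] := subset_card_between (subsetT (row_support c)) (t := d.+1).
    by rewrite small_c cardsT card_ord.
  have le_d : (\rank (selmx C *m V) <= d)%N.
    by rewrite -ltnS -cardC; apply/rank_selmx_mul_lt; exists c.
  have [|S sCS rankS] := mxrank_ext (A := selmx C *m V) (d := d); first by rewrite le_d.
  have := bddV S rankS; apply/negP; rewrite -ltnNge -cardC; apply: subset_leq_card.
  by apply/subsetP => i Ci; rewrite inE (submx_trans (row_sub_selmx_mul Ci) sCS).
rewrite leqNgt; apply/negP => big.
have [|C [_ sCS cardC]] := subset_card_between (sub0set [set i | (row i V <= S)%MS]) (t := d.+1).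
  by rewrite cards0 big.
have [|c [nz_c cV0 suppC]] := (rank_selmx_mul_lt C).1.
  rewrite cardC ltnS -rankS; apply/mxrankS/selmx_mul_sub => i /(subsetP sCS).
  by rewrite inE.
by have := supp_gt c nz_c cV0; rewrite ltnNge -cardC subset_leq_card.
Qed.

End Relations.

Lemma exists_two_nonzero_sum (F : fieldType) p n (K : 'M[F]_(p, n)) : (1 < \rank K)%N ->
  exists a b : 'rV_n, [/\ (a <= K)%MS, (b <= K)%MS, a != 0, b != 0 & a + b != 0].
Proof.
move=> rankK; pose a := nz_row K.
have nz_a : a != 0 by rewrite nz_row_eq0 -mxrank_eq0 -lt0n ltnW.
have /row_subPn[i notKia] : ~~ (K <= a)%MS.
  by apply: contraTN rankK => /mxrankS; rewrite rank_rV nz_a -leqNgt.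
exists a, (row i K); split; rewrite ?nz_row_sub ?row_sub //.
  by apply: contraNneq notKia => ->; rewrite sub0mx.
by apply: contraNneq notKia => /eqP; rewrite addrC addr_eq0 => /eqP->; rewrite eqmx_opp.
Qed.

Lemma F2_nz_le2 (x y : 'F_2) : ((x != 0%R) + (y != 0%R) + (x + y != 0)%R <= 2)%N.
Proof. by move: x y; do 2!case=> -[|[|//]] ?. Qed.

Lemma F2_row_support_sum m (a b : 'rV['F_2]_m) :
  (#|row_support a| + #|row_support b| + #|row_support (a + b)| <= 2 * m)%N.
Proof.
rewrite !card_sum_indicator -!big_split /=.
apply: (@leq_trans (\sum_(i < m) 2)%N); first by apply: leq_sum => i _; rewrite !inE mxE F2_nz_le2.
by rewrite sum_nat_const card_ord mulnC.
Qed.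

Lemma F2_relation_support_bound m n (V : 'M['F_2]_(m, n)) s : (n.+2 <= m)%N ->
  (forall c : 'rV_m, c != 0 -> c *m V = 0 -> (s < #|row_support c|)%N) ->
  (3 * s.+1 <= 2 * m)%N.
Proof.
move=> le_nm supp_gt.
have [|a [b [aK bK nz_a nz_b nz_ab]]] := exists_two_nonzero_sum (K := kermx V).
  by rewrite mxrank_ker; have := rank_leq_col V; lia.
have relK c : (c <= kermx V)%MS -> c *m V = 0 by move/sub_kermxP.
apply: leq_trans (F2_row_support_sum a b); rewrite mulSn mul2n -addnn addnC.
by rewrite !leq_add ?supp_gt ?relK ?addmx_sub.
Qed.

Definition frame (F : fieldType) n : 'M[F]_(n + 1, n) := col_mx 1%:M (const_mx 1).

Lemma frame_relation_support (F : fieldType) n (c : 'rV[F]_(n + 1)) :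
  c != 0 -> c *m frame F n = 0 -> row_support c = setT.
Proof.
move=> nz_c; rewrite -[c in c *m _]hsubmxK mul_row_col mulmx1 => /rowP rel.
set x := c 0 (rshift n 0).
have lE j : c 0 (lshift 1 j) = - x.
  by have := rel j; rewrite !mxE big_ord1 !mxE mulr1 => /eqP; rewrite addr_eq0 => /eqP.
have nz_x : x != 0.
  apply: contraNneq nz_c => x0; apply/eqP/rowP => i; rewrite mxE.
  by case: (split_ordP i) => j ->; rewrite ?lE ?x0 ?oppr0 // (ord1 j).
by apply/setP => i; rewrite !inE; case: (split_ordP i) => j ->; rewrite ?lE ?oppr_eq0 // (ord1 j).
Qed.

Section Points.
Variables (F : finFieldType) (N : nat).
Implicit Types (P : PGpoint F N) (S : 'M[F]_N.+1) (u : 'rV[F]_N.+1) (K : multiset F N).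

Lemma PGpoint_genmx P u : u != 0 -> (u <= val P)%MS -> val P = <<u>>%MS.
Proof.
case: P => S /andP[/eqP genS /eqP rankS] /= nz_u uS.
have /genmxP-> : (u == S)%MS by rewrite -(mxrank_leqif_eq uS).2 rankS rank_rV nz_u.
by rewrite genS.
Qed.

Lemma exists_PGpoint u : u != 0 -> exists P, val P = <<u>>%MS.
Proof.
move=> nz_u; have subsp_u : is_subsp 1 <<u>>%MS.
  by rewrite /is_subsp genmx_id mxrank_gen rank_rV nz_u !eqxx.
by exists (exist (fun S => is_subsp 1 S) _ subsp_u).
Qed.

Lemma count_PGpoints_through u S : u != 0 ->
  (\sum_(P : PGpoint F N | (val P <= S)%MS) ((u <= val P)%MS : nat))%N = (u <= S)%MS.
Proof.
move=> nz_u; have [Pu valPu] := exists_PGpoint nz_u.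
rewrite big_mkcond (bigD1 Pu) //= big1 ?addn0 => [|P neqP].
  by rewrite valPu !genmxE submx_refl; case: (u <= S)%MS.
case: ifP => // _; apply/eqP; rewrite eqb0; apply: contra neqP => uP.
by apply/eqP/val_inj; rewrite /= (PGpoint_genmx nz_u uP) valPu.
Qed.

Lemma mult_genmx K S : mult K <<S>>%MS = mult K S.
Proof. by apply: eq_bigl => P; rewrite genmxE. Qed.

Definition rows_multiset m (V : 'M[F]_(m, N.+1)) : multiset F N :=
  fun P => #|[set i | (row i V <= val P)%MS]|.

Lemma mult_rows_multiset m (V : 'M[F]_(m, N.+1)) S : (forall i, row i V != 0) ->
  mult (rows_multiset V) S = #|[set i | (row i V <= S)%MS]|.
Proof.
move=> nz_V; rewrite /mult /rows_multiset card_sum_indicator.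
rewrite (eq_bigr _ (fun P _ => card_sum_indicator _)).
rewrite exchange_big /=; apply: eq_bigr => i _.
by rewrite inE -(count_PGpoints_through _ (nz_V i)); apply: eq_bigr => P _; rewrite inE.
Qed.

Lemma mcard_rows_multiset m (V : 'M[F]_(m, N.+1)) : (forall i, row i V != 0) ->
  mcard (rows_multiset V) = m.
Proof.
move=> nz_V; have -> : mcard (rows_multiset V) = mult (rows_multiset V) 1%:M.
  by apply: eq_bigl => P; rewrite submx1.
rewrite mult_rows_multiset // -[RHS]card_ord -cardsT.
by apply: eq_card => i; rewrite !inE submx1.
Qed.

Definition PGpoint_vec P : 'rV[F]_N.+1 := nz_row (val P).

Lemma PGpoint_vec_neq0 P : PGpoint_vec P != 0.
Proof.
by rewrite nz_row_eq0 -mxrank_eq0; case: P => S /andP[_ /eqP->].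
Qed.

Lemma sub_PGpoint_vec P S : (val P <= S)%MS = (PGpoint_vec P <= S)%MS.
Proof. by rewrite (PGpoint_genmx (PGpoint_vec_neq0 P) (nz_row_sub _)) genmxE. Qed.

Lemma rows_of_multiset K M : (M <= mcard K)%N -> exists V : 'M[F]_(M, N.+1),
  forall S, (#|[set i | (row i V <= S)%MS]| <= mult K S)%N.
Proof.
move=> le_M; pose s := flatten [seq nseq (K P) P | P <- enum {: PGpoint F N}].
have count_s (a : pred (PGpoint F N)) : count a s = (\sum_(P | a P) K P)%N.
  rewrite count_flatten -map_comp sumnE big_map big_enum [RHS]big_mkcond.
  by apply: eq_bigr => P _; rewrite /= count_nseq; case: (a P); rewrite ?mul1n ?mul0n.
have size_s : size s = mcard K by rewrite -count_predT count_s.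
exists (\matrix_(i < M) nth 0 [seq PGpoint_vec P | P <- s] i) => S.
rewrite card_sum_indicator /mult -count_s.
under eq_bigr do rewrite inE rowK.
have -> : count (fun P => val P <= S)%MS s = count (fun u => u <= S)%MS (map PGpoint_vec s).
  by rewrite count_map; apply: eq_count => P; rewrite /= sub_PGpoint_vec.
by apply: sum_nth_le_count; rewrite size_map size_s.
Qed.

End Points.

Lemma frame_rows_bounded (F : fieldType) n d : (d < n)%N -> rows_bounded (frame F n) d.
Proof.
move=> ltdn; apply/rows_boundedP => [||c nz_c /(frame_relation_support nz_c)->].
- by rewrite addn1 ltnS ltnW.
- exact: ltnW.
- by rewrite cardsT card_ord addn1 !ltnS.
Qed.

Lemma frame_row_neq0 (F : fieldType) n i : (0 < n)%N -> row i (frame F n) != 0.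
Proof.
(* A zero row would lie in the zero subspace. *)
move=> n_gt0; have := frame_rows_bounded (F := F) n_gt0 (mxrank0 F n n).
apply: contraTneq => row0; rewrite -ltnNge card_gt0; apply/set0Pn.
by exists i; rewrite inE row0 sub0mx.
Qed.

Lemma frame_admissible (F : finFieldType) N r : (r < N)%N ->
  admissible r r.+1 (rows_multiset (frame F N.+1)).
Proof.
move=> ltrN S /andP[_ /eqP rankS].
by rewrite mult_rows_multiset => [|i]; [apply: frame_rows_bounded | apply: frame_row_neq0].
Qed.

Lemma F2_codim2_mcard_le r (K : multiset 'F_2 r.+2) :
  (1 < r)%N -> admissible r r.+1 K -> (mcard K <= r.+4)%N.
Proof.
move=> lt1r admK; rewrite leqNgt; apply/negP => /(rows_of_multiset (M := r.+4.+1))[V rowsV].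
have bddV : rows_bounded V r.+1.
  move=> S rankS; apply: leq_trans (rowsV S) _; rewrite -mult_genmx; apply: admK.
  by rewrite /is_subsp genmx_id mxrank_gen rankS !eqxx.
have := F2_relation_support_bound (s := r.+2) (leqnn _) ((rows_boundedP _ _ _).1 bddV).
lia.
Qed.

Local Close Scope ring_scope.

Theorem mainTheorem13 (k : nat) (hk : 5 <= k) :
  is_m_value ('F_2 : finFieldType) (k - 1) (k - 3) (k - 2) (k + 1).
Proof.
have [r ->] : exists r, k = r.+4.+1 by exists (k - 5); lia.
rewrite !subSS !subn0 addn1; split; last by move=> K; apply: F2_codim2_mcard_le.
exists (rows_multiset (frame 'F_2 r.+4.+1)); split; first exact: frame_admissible.
by rewrite mcard_rows_multiset ?addn1 // => i; apply: frame_row_neq0.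
Qed.
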